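(* Let $g\colon A\to D$ and $h\colon B\to D$ be lattice epimorphisms, where $A$ and $B$ are lattices with top and bottom elements $0_A,1_A,0_B,1_B$. If the fiber product $\{(a,b)\in A\times B: g(a)=h(b)\}$ is generated as a lattice by a set $G$, then $\{(a,b)\in A\times B: g(a)\le h(b)\}$ is generated as a lattice by $G\cup\{(0_A,1_B)\}$. In particular, if the fiber product is finitely generated, so is the latter sublattice. *)

From HB Require Import structures.
From mathcomp Require Import all_boot all_order.
Set Implicit Arguments. Unset Strict Implicit. Unset Printing Implicit Defensive.
Import Order.TTheory.
Local Open Scope order_scope.

Definition lattice_hom d d' (L : latticeType d) (M : latticeType d') (f : L -> M) :=
  (forall x y, f (x `&` y) = f x `&` f y) /\ (forall x y, f (x `|` y) = f x `|` f y).

Definition lattice_epi d d' (L : latticeType d) (M : latticeType d') (f : L -> M) :=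
  lattice_hom f /\ (forall y, exists x, f x = y).

Inductive pgen d1 d2 (A : latticeType d1) (B : latticeType d2)
    (G : A * B -> Prop) : A * B -> Prop :=
  | pgen_base p : G p -> pgen G p
  | pgen_meet p q : pgen G p -> pgen G q -> pgen G (p.1 `&` q.1, p.2 `&` q.2)
  | pgen_join p q : pgen G p -> pgen G q -> pgen G (p.1 `|` q.1, p.2 `|` q.2).

Definition pgenerated_by d1 d2 (A : latticeType d1) (B : latticeType d2)
    (S G : A * B -> Prop) := forall p, S p <-> pgen G p.

Definition pfinitely_generated d1 d2 (A : latticeType d1) (B : latticeType d2)
    (S : A * B -> Prop) := exists s : seq (A * B), pgenerated_by S (fun p => p \in s).

From HB Require Import structures.
From mathcomp Require Import all_boot all_order.
Set Implicit Arguments. Unset Strict Implicit. Unset Printing Implicit Defensive.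
Import Order.TTheory.
Local Open Scope order_scope.

(* Write E = {(a,b) | g a = h b} for the fiber product and
   L = {(a,b) | g a <= h b}.  If E is generated by G, then L is generated by
   G together with (0, 1):
   - L contains G (as G <= E <= L) and (0, 1) (as g 0 <= h 1), and L is a
     sublattice since g and h are monotone and preserve meets and joins; so
     the sublattice generated by G and (0, 1) lies in L;
   - conversely, for (a, b) in L pick b1 with h b1 = g a and a' with
     g a' = h b; then (a, b1 `&` b) and (a', b) lie in E and
       (a, b) = (a, b1 `&` b) `|` ((a', b) `&` (0, 1)). *)

Section Generation.
Variables (d1 d2 : Order.disp_t) (A : latticeType d1) (B : latticeType d2).

Definition sublattice_closed (S : A * B -> Prop) :=
  (forall p q, S p -> S q -> S (p.1 `&` q.1, p.2 `&` q.2)) /\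
  (forall p q, S p -> S q -> S (p.1 `|` q.1, p.2 `|` q.2)).

Lemma pgen_min (G S : A * B -> Prop) :
  sublattice_closed S -> (forall p, G p -> S p) -> forall p, pgen G p -> S p.
Proof.
move=> [SI SU] GS p; elim=> [q /GS //|q r _ Sq _ Sr|q r _ Sq _ Sr].
- exact: SI.
- exact: SU.
Qed.

Lemma pgen_mono (G H : A * B -> Prop) :
  (forall p, G p -> pgen H p) -> forall p, pgen G p -> pgen H p.
Proof.
apply: pgen_min; split=> p q; [exact: pgen_meet | exact: pgen_join].
Qed.

Lemma pgenerated_by_ext (S G H : A * B -> Prop) :
  (forall p, G p <-> H p) -> pgenerated_by S G -> pgenerated_by S H.
Proof.
move=> GH SG p; split=> [/SG|Hp]; last apply/SG; last move: Hp.
- by apply: pgen_mono => q /GH; apply: pgen_base.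
- by apply: pgen_mono => q /GH; apply: pgen_base.
Qed.

End Generation.

Lemma meet_hom_monotone d d' (L : latticeType d) (M : latticeType d')
    (f : L -> M) :
  (forall x y, f (x `&` y) = f x `&` f y) -> {homo f : x y / x <= y}.
Proof. by move=> fI x y /meet_idPl xy; apply/meet_idPl; rewrite -fI xy. Qed.

Section Fibers.
Variables (d1 d2 d3 : Order.disp_t) (A : tbLatticeType d1)
  (B : tbLatticeType d2) (D : latticeType d3) (g : A -> D) (h : B -> D).

Definition eq_fiber (p : A * B) := g p.1 = h p.2.
Definition le_fiber (p : A * B) := g p.1 <= h p.2.

Lemma le_fiber_closed :
  lattice_hom g -> lattice_hom h -> sublattice_closed le_fiber.
Proof.
move=> [gI gU] [hI hU]; split=> p q; rewrite /le_fiber /=.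
- by rewrite gI hI; apply: leI2.
- by rewrite gU hU; apply: leU2.
Qed.

(* The corner (0, 1) lies in L: g 0 is some h y, and h y <= h 1. *)
Lemma le_fiber_corner : lattice_epi h -> le_fiber (\bot, \top).
Proof.
move=> [[hI _] hS]; have [y hy] := hS (g \bot).
by rewrite /le_fiber /= -hy; apply: (meet_hom_monotone hI); apply: lex1.
Qed.

Lemma le_fiber_decompose a b : lattice_epi g -> lattice_epi h ->
  le_fiber (a, b) ->
  exists a' b1, [/\ eq_fiber (a, b1 `&` b), eq_fiber (a', b) &
    (a, b) = (a `|` (a' `&` \bot), (b1 `&` b) `|` (b `&` \top))].
Proof.
move=> [_ gS] [[hI _] hS] le_ab.
have [a' ga'] := gS (h b); have [b1 hb1] := hS (g a).
exists a', b1; split=> //.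
- by rewrite /eq_fiber /= hI hb1; apply/esym/meet_idPl.
- by rewrite meetx0 meetx1 joinx0 meetC joinC meetKU.
Qed.

Lemma le_fiber_generated (G : A * B -> Prop) :
  lattice_epi g -> lattice_epi h -> pgenerated_by eq_fiber G ->
  pgenerated_by le_fiber (fun p => G p \/ p = (\bot, \top)).
Proof.
move=> eg eh EG; set G' := fun p => G p \/ p = (\bot, \top).
have genE p : eq_fiber p -> pgen G' p.
  by move/EG; apply: pgen_mono => q Gq; apply: pgen_base; left.
have corner : pgen G' (\bot, \top) by apply: pgen_base; right.
move=> [a b]; split.
- move=> /(le_fiber_decompose eg eh) [a' [b1 [E1 E2 ->]]].
  by apply: pgen_join (genE _ E1) (pgen_meet (genE _ E2) corner).
- apply: (pgen_min (le_fiber_closed eg.1 eh.1)) => q.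
  move=> [/pgen_base /EG Eq | ->]; last exact: le_fiber_corner eh.
  by rewrite /le_fiber Eq.
Qed.

End Fibers.

Theorem mainTheorem8 (d1 d2 d3 : Order.disp_t) (A : tbLatticeType d1) (B : tbLatticeType d2)
    (D : latticeType d3) (g : A -> D) (h : B -> D) :
  lattice_epi g -> lattice_epi h ->
  (forall G : A * B -> Prop,
     pgenerated_by (fun p => g p.1 = h p.2) G ->
     pgenerated_by (fun p => g p.1 <= h p.2)
       (fun p => G p \/ p = (\bot, \top))) /\
  (pfinitely_generated (fun p : A * B => g p.1 = h p.2) ->
   pfinitely_generated (fun p : A * B => g p.1 <= h p.2)).
Proof.
move=> eg eh; split=> [G|[s Es]]; first exact: le_fiber_generated.
exists (rcons s (\bot, \top)).
apply: pgenerated_by_ext (le_fiber_generated eg eh Es) => p.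
by rewrite mem_rcons inE; split=> [[->|/eqP->]|/orP[/eqP|]]; rewrite ?orbT; auto.
Qed.
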